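(* Consider the scenario of three two-outcome measurements $1,2,3$, each pair of which is compatible, and Specker's behaviour in which, for each pair $(i,j)\in\{(1,2),(2,3),(3,1)\}$, $P(00\mid ij)=P(11\mid ij)=0$ and $P(01\mid ij)=P(10\mid ij)=\tfrac12$. Then the product of two statistically independent copies of this behaviour violates the exclusivity principle: there is a set of pairwise mutually exclusive events of the two-copy experiment whose probabilities sum to more than $1$. The same holds for Wright's behaviour on five two-outcome measurements $1,\dots,5$ with $i$ and $i+1 \pmod 5$ compatible, defined by $P(00\mid i,i+1)=P(11\mid i,i+1)=0$, $P(01\mid i,i+1)=P(10\mid i,i+1)=\tfrac12$.
   Context: $P(a b\mid i j)$ denotes the probability of outcomes $a$ for measurement $i$ and $b$ for measurement $j$. Two events are mutually exclusive if they assign different outcomes to a common measurement. In the joint experiment of two statistically independent copies, events are pairs $(e,e')$ with probability $P(e)P(e')$, and $(e,e')$, $(f,f')$ are mutually exclusive iff $e,f$ are exclusive or $e',f'$ are exclusive. The exclusivity principle: the probabilities of any set of pairwise mutually exclusive events sum to at most $1$. *)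

From HB Require Import structures.
From mathcomp Require Import all_boot all_order all_algebra.
Set Implicit Arguments. Unset Strict Implicit. Unset Printing Implicit Defensive.
Import Order.TTheory GRing.Theory Num.Theory.

(* A scenario: n two-outcome measurements 'I_n, and k contexts of pairwise
   compatible measurements, context t being the ordered pair ctx t = (i, j).
   An event (t, (a, b)) is "outcome a for measurement i and outcome b for j"
   with (i, j) = ctx t, i.e. the event (ab|ij). *)
Definition event (k : nat) : finType := ('I_k * (bool * bool))%type.

Definition assigns (n k : nat) (ctx : 'I_k -> 'I_n * 'I_n)
  (e : event k) (m : 'I_n) (v : bool) : bool :=
  (((ctx e.1).1 == m) && (e.2.1 == v)) || (((ctx e.1).2 == m) && (e.2.2 == v)).

Definition exclusive (n k : nat) (ctx : 'I_k -> 'I_n * 'I_n) (e f : event k) : bool :=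
  [exists m : 'I_n, exists v : bool, assigns ctx e m v && assigns ctx f m (~~ v)].

Definition exclusive2 (n k : nat) (ctx : 'I_k -> 'I_n * 'I_n)
  (E F : event k * event k) : bool :=
  exclusive ctx E.1 F.1 || exclusive ctx E.2 F.2.

Definition prob2 (k : nat) (P : event k -> rat) (E : event k * event k) : rat :=
  (P E.1 * P E.2)%R.

Definition violates_EP_two_copies (n k : nat) (ctx : 'I_k -> 'I_n * 'I_n)
  (P : event k -> rat) : Prop :=
  exists S : {set event k * event k},
    {in S &, forall E F, E != F -> exclusive2 ctx E F} /\
    (1 < \sum_(E in S) prob2 P E)%R.

(* Cyclic scenario on N measurements: contexts (i, i+1 mod N), i < N.
   (ordS t has value t.+1 %% N.)  For N = 3: (1,2),(2,3),(3,1) (0-indexed). For N = 5: Wright's pentagon. *)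
Definition cyc_ctx (N : nat) (t : 'I_N) : 'I_N * 'I_N :=
  (t, ordS t).

Definition anticorr (k : nat) (e : event k) : rat :=
  if e.2.1 != e.2.2 then (1 / 2)%R else 0%R.

From mathcomp Require Import all_boot all_order all_algebra.
From mathcomp Require Import lra.
Import Order.TTheory GRing.Theory Num.Theory.

(* In the cyclic scenario the event (01|t,t+1) gives outcome 1 to measurement
   t+1, which (01|t+1,t+2) answers with 0, so such events in adjacent contexts
   are exclusive; each has probability 1/2 under the anticorrelated behaviour.
   In the triangle any two contexts are adjacent, so all nine pairs of these
   events are pairwise exclusive in the two-copy experiment: total 9/4.  In
   the pentagon, the five pairs ((01|t,t+1), (01|2t,2t+1)) are pairwise
   exclusive because t - s = +-2 forces 2t - 2s = -+1 (mod 5): total 5/4. *)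

Set Implicit Arguments.
Unset Strict Implicit.
Unset Printing Implicit Defensive.

Section Exclusivity.
Variables (n k : nat) (ctx : 'I_k -> 'I_n * 'I_n).

Lemma exclusive_sym : symmetric (exclusive ctx).
Proof.
suff imp e f : exclusive ctx e f -> exclusive ctx f e.
  by move=> e f; apply/idP/idP; apply: imp.
case/existsP=> m /existsP[v /andP[ef ff]].
by apply/existsP; exists m; apply/existsP; exists (~~ v); rewrite negbK ff ef.
Qed.

Lemma violates_EP_two_copies_inj (P : event k -> rat) (I : finType)
    (E : I -> event k * event k) :
  injective E -> (forall i j, i != j -> exclusive2 ctx (E i) (E j)) ->
  (1 < \sum_i prob2 P (E i))%R -> violates_EP_two_copies ctx P.
Proof.
move=> Einj Eexcl sum_gt1; exists (E @: setT); split.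
  move=> _ _ /imsetP[i _ ->] /imsetP[j _ ->] Eij.
  by apply: Eexcl; apply: contraNneq Eij => ->.
rewrite big_imset; last by move=> i j _ _; apply: Einj.
by rewrite (eq_bigl xpredT) // => i; rewrite inE.
Qed.

End Exclusivity.

Section CyclicScenario.
Variable N : nat.

Definition ev01 (t : 'I_N) : event N := (t, (false, true)).

Definition cyc_adj (t s : 'I_N) : bool := (s == ordS t) || (t == ordS s).

Lemma exclusive_ev01_succ (t : 'I_N) :
  exclusive (@cyc_ctx N) (ev01 t) (ev01 (ordS t)).
Proof.
by apply/existsP; exists (ordS t); apply/existsP; exists true;
  rewrite /assigns /= !eqxx ?orbT.
Qed.

Lemma exclusive_ev01 (t s : 'I_N) :
  cyc_adj t s -> exclusive (@cyc_ctx N) (ev01 t) (ev01 s).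
Proof.
by case/orP=> /eqP->; [|rewrite exclusive_sym]; apply: exclusive_ev01_succ.
Qed.

Lemma prob2_ev01 (t s : 'I_N) :
  prob2 (@anticorr N) (ev01 t, ev01 s) = (1 / 4)%R.
Proof. by rewrite /prob2 /anticorr /=; lra. Qed.

Lemma anticorr_violates_EP (I : finType) (g : I -> 'I_N * 'I_N) :
  injective g ->
  (forall i j, i != j -> cyc_adj (g i).1 (g j).1 || cyc_adj (g i).2 (g j).2) ->
  4 < #|I| -> violates_EP_two_copies (@cyc_ctx N) (@anticorr N).
Proof.
move=> ginj gadj cardI.
pose E i := (ev01 (g i).1, ev01 (g i).2).
apply: (@violates_EP_two_copies_inj _ _ _ _ _ E).
- move=> i j; rewrite /ev01 => -[e1 e2]; apply: ginj.
  by rewrite [g i]surjective_pairing [g j]surjective_pairing e1 e2.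
- move=> i j /gadj /orP[] /exclusive_ev01 excl; by rewrite /exclusive2 excl ?orbT.
- rewrite (eq_bigr (fun=> 1 / 4)%R) => [|i _]; last exact: prob2_ev01.
  rewrite sumr_const -mulr_natr.
  have : (5%:R <= #|I|%:R :> rat)%R by rewrite ler_nat.
  lra.
Qed.

End CyclicScenario.

Lemma cyc3_adj (t s : 'I_3) : t != s -> cyc_adj t s.
Proof. by move: t s => [[|[|[|?]]] ?] [[|[|[|?]]] ?]. Qed.

Lemma wright_adj (t s : 'I_5) :
  t != s -> cyc_adj t s || cyc_adj (t + t)%R (s + s)%R.
Proof. by move: t s => [[|[|[|[|[|?]]]]] ?] [[|[|[|[|[|?]]]]] ?]. Qed.

Theorem mainTheorem7 :
  violates_EP_two_copies (@cyc_ctx 3) (@anticorr 3) /\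
  violates_EP_two_copies (@cyc_ctx 5) (@anticorr 5).
Proof.
split.
- apply: (@anticorr_violates_EP 3 _ id) => [//|[t s] [t' s'] /=|];
    last by rewrite card_prod card_ord.
  case: (eqVneq t t') => [<-|/cyc3_adj -> //].
  by rewrite xpair_eqE eqxx => /cyc3_adj ->; rewrite orbT.
- apply: (@anticorr_violates_EP 5 _ (fun t => (t, t + t)%R)) => [t s [] //||];
    [exact: wright_adj | by rewrite card_ord].
Qed.
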